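(* Consider the three-mass system in $\mathbb{R}^2$ described in the context, reduced by $x$-translation symmetry to a vector field on $TQ/\mathbb{R}$. Let $\hat q_*\in Q/\mathbb{R}$ be a non-degenerate minimum of the reduced potential $\hat U$, i.e. $\mathrm{d}\hat U(\hat q_* )=0$ and the Hessian $\hat K$ of $\hat U$ at $\hat q_*$ is positive definite, and suppose the total Rayleigh dissipation function $R$ is positive definite on the fiber of $TQ/\mathbb{R}$ above $\hat q_*$. Then $(\hat q_*,0)\in TQ/\mathbb{R}$ is a robustly stable equilibrium of the reduced system.
   Context: Three unit masses $q_i=(x_i,z_i)\in\mathbb{R}^2$, $Q=\{q\in\mathbb{R}^6:q_i\neq q_j\}$, $\ell_k=\|q_i-q_j\|$ for $\{i,j,k\}=\{1,2,3\}$, $\chi(s)=\tfrac12 s^2$ for $s<0$ and $0$ otherwise (tacitly smoothed near $0$). Equations of motion: $\ddot q=F(q,\dot q)-\mathrm{d}U(q)$ with $U=\frac{\kappa_s}{2}\sum_k(\ell_k-\bar\ell_k)^2+\kappa_{\mathrm{np}}\sum_i\chi(z_i)+\sum_i z_i$ and $F=-\partial R/\partial\dot q$, where $R=\frac{\nu_s}{2}\sum_k\dot\ell_k^2-\frac{\nu_{\mathrm{ns}}}{2}\sum_i\chi'(z_i)\dot x_i^2+\frac{\nu_{\mathrm{db}}}{2}\sum_i\chi(z_i)\dot z_i^2$, all constants positive. Everything is invariant under the free proper action of $(\mathbb{R},+)$ translating all $x_i$ (trivially on velocities), giving reduced potential $\hat U$ with $U=\hat U\circ\pi$ and a reduced vector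 field on $TQ/\mathbb{R}$. An equilibrium $x_*$ of $\dot x=f(x)$ is robustly stable if $f(x_* )=0$ and the spectrum of $Df(x_* )$ lies strictly in the open left half-plane. *)

From HB Require Import structures.
From mathcomp Require Import all_boot all_order all_algebra.
From mathcomp Require Import all_classical all_reals all_analysis.
From mathcomp Require Import complex.
Set Implicit Arguments. Unset Strict Implicit. Unset Printing Implicit Defensive.
Import Order.TTheory GRing.Theory Num.Theory.
Import numFieldNormedType.Exports.
Local Open Scope ring_scope.

Section ThreeMass.
Variable R : realType.

Definition ebasis (n : nat) (a : 'I_n) : 'rV[R]_n := delta_mx 0 a.

(* A configuration q in R^6 is (x_1,z_1,x_2,z_2,x_3,z_3); masses indexed by 'I_3. *)
Definition xi (i : 'I_3) : 'I_6 := inord (2 * i).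
Definition zi (i : 'I_3) : 'I_6 := inord (2 * i + 1).
Definition xc (q : 'rV[R]_6) (i : 'I_3) : R := q 0 (xi i).
Definition zc (q : 'rV[R]_6) (i : 'I_3) : R := q 0 (zi i).

Definition inQ (q : 'rV[R]_6) : Prop :=
  forall i j : 'I_3, i != j -> (xc q i, zc q i) != (xc q j, zc q j).

(* For k, the two other indices {i,j} = {1,2,3} \ {k}. *)
Definition oth1 (k : 'I_3) : 'I_3 := inord ((k + 1) %% 3).
Definition oth2 (k : 'I_3) : 'I_3 := inord ((k + 2) %% 3).

Definition len (q : 'rV[R]_6) (k : 'I_3) : R :=
  Num.sqrt ((xc q (oth1 k) - xc q (oth2 k)) ^+ 2 + (zc q (oth1 k) - zc q (oth2 k)) ^+ 2).

Definition chi0 (s : R) : R := if s < 0 then s ^+ 2 / 2 else 0.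

Definition smoothing_of_chi0 (chi : R -> R) : Prop :=
  (forall (n : nat) (s : R), derivable (derive1n n chi) s 1) /\
  exists eps : R, 0 < eps /\ forall s : R, eps <= `|s| -> chi s = chi0 s.

Definition Upot (ks kn : R) (lbar : 'I_3 -> R) (chi : R -> R) (q : 'rV[R]_6) : R :=
  ks / 2 * \sum_(k < 3) (len q k - lbar k) ^+ 2
  + kn * \sum_(i < 3) chi (zc q i) + \sum_(i < 3) zc q i.

Definition Rayleigh (nus nuns nudb : R) (chi : R -> R) (q qd : 'rV[R]_6) : R :=
  nus / 2 * \sum_(k < 3) ('D_qd (fun p => len p k) q) ^+ 2
  - nuns / 2 * \sum_(i < 3) (derive1 chi (zc q i)) * (xc qd i) ^+ 2
  + nudb / 2 * \sum_(i < 3) chi (zc q i) * (zc qd i) ^+ 2.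

Definition Fdiss (nus nuns nudb : R) (chi : R -> R) (q qd : 'rV[R]_6) : 'rV[R]_6 :=
  \row_(a < 6) - 'D_(ebasis a) (Rayleigh nus nuns nudb chi q) qd.
Definition dU (ks kn : R) (lbar : 'I_3 -> R) (chi : R -> R) (q : 'rV[R]_6) : 'rV[R]_6 :=
  \row_(a < 6) 'D_(ebasis a) (Upot ks kn lbar chi) q.

(* Coordinates on Q/R: y = (x_2 - x_1, x_3 - x_1, z_1, z_2, z_3).
   projQ : Q -> Q/R, and liftQ : Q/R -> Q the section with x_1 = 0. *)
Definition projQ (q : 'rV[R]_6) : 'rV[R]_5 :=
  \row_(b < 5) [:: xc q 1 - xc q 0; xc q 2%:R - xc q 0; zc q 0; zc q 1; zc q 2%:R]`_b.
Definition liftQ (y : 'rV[R]_5) : 'rV[R]_6 :=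
  \row_(a < 6) [:: 0; y 0 (inord 2); y 0 (inord 0); y 0 (inord 3); y 0 (inord 1); y 0 (inord 4)]`_a.

(* Reduced potential Uhat, U = Uhat o projQ. *)
Definition Uhat (ks kn : R) (lbar : 'I_3 -> R) (chi : R -> R) (y : 'rV[R]_5) : R :=
  Upot ks kn lbar chi (liftQ y).

(* TQ/R = (Q/R) x R^6 (the action is trivial on velocities); a state is
   row_mx y v with y in Q/R-coordinates and v in R^6.  The reduced vector
   field is the push-forward of (qdot, qddot) = (v, F(q,v) - dU(q)). *)
Definition fred (ks kn nus nuns nudb : R) (lbar : 'I_3 -> R) (chi : R -> R)
    (X : 'rV[R]_(5 + 6)) : 'rV[R]_(5 + 6) :=
  let y := lsubmx X in let v := rsubmx X in
  row_mx ('D_v projQ (liftQ y))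
         (Fdiss nus nuns nudb chi (liftQ y) v - dU ks kn lbar chi (liftQ y)).

Definition hessian (n : nat) (g : 'rV[R]_n -> R) (x : 'rV[R]_n) : 'M[R]_n :=
  \matrix_(i < n, j < n) 'D_(ebasis i) (fun y => 'D_(ebasis j) g y) x.

Definition posdef_mx (n : nat) (K : 'M[R]_n) : Prop :=
  forall w : 'rV[R]_n, w != 0 -> 0 < (w *m K *m w^T) 0 0.

(* Robust stability of an equilibrium of xdot = f(x). The matrix of Df(x)
   (acting on row vectors) is lin1_mx ('d f x); its spectrum is the set of
   complex eigenvalues. *)
Definition robustly_stable (n : nat) (f : 'rV[R]_n -> 'rV[R]_n) (x : 'rV[R]_n) : Prop :=
  f x = 0 /\ differentiable f x /\
  forall lam : R[i],
    eigenvalue (map_mx (fun r : R => (r%:C)%C) (lin1_mx ('d f x))) lam -> complex.Re lam < 0.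

End ThreeMass.
Arguments ebasis {R n} a.

(* At the equilibrium (y*, 0) the reduced vector field linearizes to a damped
   mechanical system  y' = π v,  v' = -C v - K (ι y),  where π : R^6 -> Q/R is
   the quotient map, ι its section x_1 = 0, C the polar form of the Rayleigh
   function at ι y* and K the Hessian form of U there.  Both forms are
   symmetric, C is positive definite, K is invariant under x-translations
   (K(u, ι π w) = K(u, w)) and positive definite on the image of ι.
   Split an eigenvector for α + iβ into real and imaginary parts (y_r, v_r),
   (y_i, v_i).  Pairing the velocity equations with v_r and v_i and using the
   position equations to rewrite K(ι y, v) as a combination of K(ι y, ι y'),
   the β-terms cancel by symmetry and
     α (|v_r|² + |v_i|² + K(ι y_r, ι y_r) + K(ι y_i, ι y_i)) = -(C(v_r, v_r) + C(v_i, v_i)).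
   Hence α ≤ 0, and α = 0 forces v_r = v_i = 0, then K(ι y, ·) = 0, so y = 0. *)
From HB Require Import structures.
From mathcomp Require Import all_boot all_order all_algebra.
From mathcomp Require Import all_classical all_reals all_analysis.
From mathcomp Require Import complex.
From mathcomp Require Import ring lra.
Import Order.TTheory GRing.Theory Num.Theory.
Import numFieldNormedType.Exports.
Local Open Scope ring_scope.
Set Implicit Arguments. Unset Strict Implicit. Unset Printing Implicit Defensive.

Section RealValuedDifferentiation.
Variables (R : realType) (V : normedModType R).
Implicit Types (f g df dg : V -> R) (x : V).

(* Restatements of [is_diffD], [is_diffB], [is_diffM], ... whose conclusions
   are lambda-terms, so that they unify with explicit formulas. *)
Lemma is_diff_add f g df dg x : is_diff x f df -> is_diff x g dg ->
  is_diff x (fun y => f y + g y) (fun v => df v + dg v).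
Proof. by move=> ? ?; exact: is_diffD. Qed.

Lemma is_diff_sub f g df dg x : is_diff x f df -> is_diff x g dg ->
  is_diff x (fun y => f y - g y) (fun v => df v - dg v).
Proof. by move=> ? ?; exact: is_diffB. Qed.

Lemma is_diff_opp f df x : is_diff x f df -> is_diff x (fun y => - f y) (fun v => - df v).
Proof. by move=> ?; exact: is_diffN. Qed.

Lemma is_diff_mul f g df dg x : is_diff x f df -> is_diff x g dg ->
  is_diff x (fun y => f y * g y) (fun v => f x * dg v + g x * df v).
Proof. by move=> ? ?; exact: is_diffM. Qed.

Lemma is_diff_const (a : R) x : is_diff x (fun _ => a) (fun _ => 0).
Proof. exact: is_diff_cst. Qed.

Lemma is_diff_sqr f df x : is_diff x f df ->
  is_diff x (fun y => f y ^+ 2) (fun v => 2 * (f x * df v)).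
Proof.
move=> hf; have -> : (fun y => f y ^+ 2) = (fun y => f y * f y).
  by apply/funext => y; rewrite expr2.
by apply: is_diff_eq (is_diff_mul hf hf) _; apply/funext => v; ring.
Qed.

Lemma is_diff_mul_vanishing_l f g df dg x : is_diff x f df -> is_diff x g dg -> f x = 0 ->
  is_diff x (fun y => f y * g y) (fun v => df v * g x).
Proof.
move=> hf hg fx0; apply: is_diff_eq (is_diff_mul hf hg) _.
by apply/funext => v; rewrite fx0 mul0r add0r mulrC.
Qed.

Lemma is_diff_mul_vanishing_r f g df dg x : is_diff x f df -> is_diff x g dg -> g x = 0 ->
  is_diff x (fun y => f y * g y) (fun v => f x * dg v).
Proof.
move=> hf hg gx0; apply: is_diff_eq (is_diff_mul hf hg) _.
by apply/funext => v; rewrite gx0 mul0r addr0.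
Qed.

Lemma is_diff_sum n (F dF : 'I_n -> V -> R) x : (forall i, is_diff x (F i) (dF i)) ->
  is_diff x (fun y => \sum_(i < n) F i y) (fun v => \sum_(i < n) dF i v).
Proof.
move=> hF.
have -> : (fun y => \sum_(i < n) F i y) = \sum_(i < n) F i.
  by apply/funext => y; rewrite fct_sumE.
have -> : (fun v => \sum_(i < n) dF i v) = \sum_(i < n) dF i.
  by apply/funext => y; rewrite fct_sumE.
elim/big_rec2 : _ => [|i y1 y2 _ IH]; first exact: is_diff_cst.
exact: is_diffD.
Qed.

Lemma is_diff_scalel (W : normedModType R) f df (c : W) x : is_diff x f df ->
  is_diff x (fun y => f y *: c) (fun v => df v *: c).
Proof.
move=> [df1 df2]; apply: DiffDef; first exact: differentiableZl.
by rewrite diffZl // df2.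
Qed.

Lemma is_diff_derivable_comp (h : R -> R) f df x :
  is_diff x f df -> derivable h (f x) 1 ->
  is_diff x (fun y => h (f y)) (fun v => derive1 h (f x) * df v).
Proof.
move=> hf dh.
have hh : is_diff (f x) h (fun t => t *: derive1 h (f x)).
  by apply: DiffDef; [exact/derivable1_diffP | rewrite deriv1E].
have hc := is_diff_comp hf hh.
have -> : (fun v => derive1 h (f x) * df v) = (fun v => df v *: derive1 h (f x)).
  by apply/funext => v; rewrite mulrC.
exact: hc.
Qed.

Lemma is_diff_inv f df x : is_diff x f df -> f x != 0 ->
  is_diff x (fun y => (f y)^-1) (fun v => - (f x) ^- 2 * df v).
Proof.
move=> [df1 df2] fx0; apply: DiffDef; first exact: differentiableV.
by rewrite diffV // df2.
Qed.

Lemma is_diff_row n (F : V -> 'rV[R]_n) (dF : 'I_n -> V -> R) x :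
  (forall j, is_diff x (fun y => F y 0 j) (dF j)) ->
  is_diff x F (fun v => \row_j dF j v).
Proof.
move=> hF.
have -> : F = \sum_(j < n) (fun y => F y 0 j *: (delta_mx 0 j : 'rV[R]_n)).
  by apply/funext => y; rewrite fct_sumE {1}[F y]row_sum_delta.
have -> : (fun v => \row_j dF j v) = \sum_(j < n) (fun v => dF j v *: (delta_mx 0 j : 'rV[R]_n)).
  apply/funext => v; rewrite fct_sumE {1}[\row_j _]row_sum_delta.
  by apply: eq_bigr => j _; rewrite mxE.
elim/big_rec2 : _ => [|j y1 y2 _ IH]; first exact: is_diff_cst.
by apply: is_diffD => //; exact: is_diff_scalel.
Qed.

Lemma near_eq_is_diff (W : normedModType R) (f g dg : V -> W) x :
  (\forall y \near x, f y = g y) -> is_diff x g dg -> is_diff x f dg.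
Proof.
move=> fg [dgx dgv].
have fxgx : f x = g x by exact: (nbhs_singleton fg).
have key : f \o shift x = cst (f x) + 'd g x +o_ 0 id.
  apply/eqaddoP => e e0.
  have /diff_locally /eqaddoP := dgx => /(_ e e0) Hg.
  have fg0 : \forall h \near 0, f (h + x) = g (h + x).
    move: fg; rewrite (near_shift 0 x).
    by apply: filterS => h; rewrite /= subr0.
  move: Hg fg0; apply: filterS2 => h H1 H2.
  by move: H1; rewrite !fctE /= fxgx H2.
have dfe : 'd f x = 'd g x :> (V -> W).
  exact: (diff_unique (diff_continuous dgx) key).
apply: DiffDef; last by rewrite dfe.
apply/diff_locallyP; rewrite dfe; split => //; exact: diff_continuous.
Qed.

End RealValuedDifferentiation.

Section Differentiation.
Variable R : realType.

Lemma is_diff_compose (U V W : normedModType R) (f df : U -> V) (g dg : V -> W) (u : U) :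
  is_diff u f df -> is_diff (f u) g dg ->
  is_diff u (fun z => g (f z)) (fun v => dg (df v)).
Proof. by move=> ? ?; exact: is_diff_comp. Qed.

Lemma is_diff_compose_at (U V W : normedModType R) (f df : U -> V) (g dg : V -> W) u x :
  is_diff u f df -> f u = x -> is_diff x g dg ->
  is_diff u (fun z => g (f z)) (fun v => dg (df v)).
Proof. by move=> hf <- hg; exact: is_diff_compose. Qed.

Lemma is_diff_derive (V W : normedModType R) (f df : V -> W) x v :
  is_diff x f df -> 'D_v f x = df v.
Proof. by move=> [d1 d2]; rewrite deriveE // d2. Qed.

Lemma is_diff_coord m n (i : 'I_m) (j : 'I_n) (x : 'M[R]_(m, n)) :
  is_diff x (fun X : 'M[R]_(m, n) => X i j) (fun v => v i j).
Proof.
have @f : {linear 'M[R]_(m, n) -> R}.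
  by exists (fun N : 'M[R]_(_, _) => N i j); do 2![eexists]; do ?[constructor];
     rewrite ?mxE// => ? *; rewrite ?mxE//; move=> ?; rewrite !mxE.
rewrite (_ : (fun _ => _) = f) //; apply: DiffDef.
  exact/linear_differentiable/coord_continuous.
by rewrite diff_lin //; exact: coord_continuous.
Qed.

Lemma is_diff_entry (V : normedModType R) m (F dF : V -> 'rV[R]_m) x j :
  is_diff x F dF -> is_diff x (fun y => F y 0 j) (fun v => dF v 0 j).
Proof. by move=> h; exact: is_diff_compose h (is_diff_coord 0 j (F x)). Qed.

Lemma is_diff_lsubmx m n (X : 'rV[R]_(m + n)) : is_diff X (@lsubmx R 1 m n) (@lsubmx R 1 m n).
Proof.
apply: DiffDef; first exact: differentiable_lsubmx.
by rewrite diff_lin //; exact: continuous_lsubmx.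
Qed.

Lemma is_diff_rsubmx m n (X : 'rV[R]_(m + n)) : is_diff X (@rsubmx R 1 m n) (@rsubmx R 1 m n).
Proof.
apply: DiffDef; first exact: differentiable_rsubmx.
by rewrite diff_lin //; exact: continuous_rsubmx.
Qed.

Lemma derive_comp_linear (U V W : normedModType R) (l : U -> V) (f : V -> W) (x v : U) :
  (forall (h : R) (v x : U), l (h *: v + x) = h *: l v + l x) ->
  'D_v (fun y => f (l y)) x = 'D_(l v) f (l x).
Proof.
move=> hl; rewrite /derive; congr lim.
have -> : (fun h : R => h^-1 *: (f (l (h *: v + x)) - f (l x))) =
          (fun h : R => h^-1 *: (f (h *: l v + l x) - f (l x))).
  by apply/funext => h; rewrite hl.
by [].
Qed.

Lemma derive_affine_line (V W : normedModType R) (f : V -> W) (a v : V) (c : W) :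
  (forall h : R, f (h *: v + a) = h *: c + f a) -> 'D_v f a = c.
Proof.
move=> hf; rewrite /derive; apply: cvg_lim => //.
apply/cvgrPdist_le => e e0; near=> h.
rewrite /= hf addrK scalerA mulVf ?scale1r ?subrr ?normr0 ?ltW //.
near: h; exact: nbhs_dnbhs_neq.
Unshelve. all: by end_near. Qed.

End Differentiation.

Section ScalarForms.
Variable R : realType.

Lemma scalar0 (U : lmodType R) (f : U -> R) : scalar f -> f 0 = 0.
Proof. by move=> hf; have := hf (-1) 0 0; rewrite scaler0 addr0 mulN1r addNr. Qed.

Lemma scalar_combD (U : lmodType R) (f : U -> R) a b x y :
  scalar f -> f (a *: x + b *: y) = a * f x + b * f y.
Proof.
move=> hf; rewrite hf -[b *: y]addr0 hf scalar0 //; ring.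
Qed.

Lemma scalar_combB (U : lmodType R) (f : U -> R) a b x y :
  scalar f -> f (a *: x - b *: y) = a * f x - b * f y.
Proof. by move=> hf; rewrite -scaleNr scalar_combD //; ring. Qed.

Lemma scalar_add (U : lmodType R) (f g : U -> R) :
  scalar f -> scalar g -> scalar (fun w => f w + g w).
Proof. by move=> hf hg a w1 w2; rewrite hf hg; ring. Qed.

Lemma scalar_sub (U : lmodType R) (f g : U -> R) :
  scalar f -> scalar g -> scalar (fun w => f w - g w).
Proof. by move=> hf hg a w1 w2; rewrite hf hg; ring. Qed.

Lemma scalar_opp (U : lmodType R) (f : U -> R) : scalar f -> scalar (fun w => - f w).
Proof. by move=> hf a w1 w2; rewrite hf; ring. Qed.

Lemma scalar_mull (U : lmodType R) (c : R) (f : U -> R) :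
  scalar f -> scalar (fun w => c * f w).
Proof. by move=> hf a w1 w2; rewrite hf; ring. Qed.

Lemma scalar_sum (U : lmodType R) m (F : 'I_m -> U -> R) :
  (forall k, scalar (F k)) -> scalar (fun w => \sum_(k < m) F k w).
Proof.
move=> hF a w1 w2; rewrite mulr_sumr -big_split.
by apply: eq_bigr => k _; exact: hF.
Qed.

Lemma scalar_comp (U W : lmodType R) (l : U -> W) (f : W -> R) :
  linear l -> scalar f -> scalar (fun w => f (l w)).
Proof. by move=> hl hf a w1 w2; rewrite hl hf. Qed.

Lemma scalar_basis n (f : 'rV[R]_n -> R) (v : 'rV[R]_n) :
  scalar f -> f v = \sum_(a < n) v 0 a * f (ebasis a).
Proof.
move=> hf; rewrite {1}[v]row_sum_delta.
by elim/big_rec2 : _ => [|a y1 y2 _ <-]; [exact: scalar0 | exact: hf].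
Qed.

Lemma scalar_eq_basis n (f g : 'rV[R]_n -> R) (v : 'rV[R]_n) :
  scalar f -> scalar g -> (forall a, f (ebasis a) = g (ebasis a)) -> f v = g v.
Proof.
move=> hf hg fg; rewrite (scalar_basis v hf) (scalar_basis v hg).
by apply: eq_bigr => a _; rewrite fg.
Qed.

Definition dotr n (v w : 'rV[R]_n) := \sum_(a < n) v 0 a * w 0 a.

Lemma dotrC n (v w : 'rV[R]_n) : dotr v w = dotr w v.
Proof. by apply: eq_bigr => a _; rewrite mulrC. Qed.

Lemma dotr_ge0 n (v : 'rV[R]_n) : 0 <= dotr v v.
Proof. by apply: sumr_ge0 => a _; rewrite -expr2 sqr_ge0. Qed.

Lemma dotr_ebasis n (v : 'rV[R]_n) a : dotr v (ebasis a) = v 0 a.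
Proof.
rewrite /dotr (bigD1 a) //= big1 ?addr0; first by rewrite /ebasis mxE !eqxx mulr1.
by move=> b ba; rewrite /ebasis mxE (negbTE ba) andbF mulr0.
Qed.

Lemma dotr_scalar n (v : 'rV[R]_n) : scalar (dotr v).
Proof.
move=> a w1 w2; rewrite /dotr mulr_sumr -big_split.
by apply: eq_bigr => b _; rewrite !mxE /=; ring.
Qed.

End ScalarForms.

Section RealEigenpairs.
Variable R : realType.
Implicit Types x y : R[i].

Lemma Re_sum n (F : 'I_n -> R[i]) : complex.Re (\sum_(i < n) F i) = \sum_(i < n) complex.Re (F i).
Proof. by elim/big_rec2: _ => // i y1 y2 _ <-; case: (F i); case: y2. Qed.

Lemma Im_sum n (F : 'I_n -> R[i]) : complex.Im (\sum_(i < n) F i) = \sum_(i < n) complex.Im (F i).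
Proof. by elim/big_rec2: _ => // i y1 y2 _ <-; case: (F i); case: y2. Qed.

Lemma Re_mul x y : complex.Re (x * y) = complex.Re x * complex.Re y - complex.Im x * complex.Im y.
Proof. by case: x => a b; case: y => c d /=; ring. Qed.

Lemma Im_mul x y : complex.Im (x * y) = complex.Re x * complex.Im y + complex.Im x * complex.Re y.
Proof. by case: x => a b; case: y => c d /=; ring. Qed.

Lemma Re_mul_real x (r : R) : complex.Re (x * (r%:C)%C) = complex.Re x * r.
Proof. by case: x => a b /=; ring. Qed.

Lemma Im_mul_real x (r : R) : complex.Im (x * (r%:C)%C) = complex.Im x * r.
Proof. by case: x => a b /=; ring. Qed.

Lemma eigenvalue_real_pair n (A : 'M[R]_n) (lam : R[i]) :
  eigenvalue (map_mx (fun r : R => (r%:C)%C) A) lam ->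
  exists Xr Xi : 'rV[R]_n,
    [/\ Xr *m A = complex.Re lam *: Xr - complex.Im lam *: Xi,
        Xi *m A = complex.Im lam *: Xr + complex.Re lam *: Xi
      & (Xr != 0) || (Xi != 0)].
Proof.
move=> /eigenvalueP [u hu u0].
exists (\row_j complex.Re (u 0 j)), (\row_j complex.Im (u 0 j)); split.
- apply/rowP => j; have := congr1 (fun M : 'rV[R[i]]_n => complex.Re (M 0 j)) hu.
  rewrite /= !mxE Re_sum Re_mul => <-.
  by apply: eq_bigr => i _; rewrite !mxE Re_mul_real.
- apply/rowP => j; have := congr1 (fun M : 'rV[R[i]]_n => complex.Im (M 0 j)) hu.
  rewrite /= !mxE Im_sum Im_mul addrC => <-.
  by apply: eq_bigr => i _; rewrite !mxE Im_mul_real.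
- move: u0; apply: contraNT; rewrite negb_or !negbK => /andP[/eqP hr /eqP hi].
  apply/eqP/rowP => j.
  have := congr1 (fun M : 'rV[R]_n => M 0 j) hr; have := congr1 (fun M : 'rV[R]_n => M 0 j) hi.
  by rewrite /= !mxE; case: (u 0 j) => a b /= -> ->.
Qed.

End RealEigenpairs.

Section DampedLinearSystem.
Variables (R : realType) (n m : nat).
Variables (proj : 'rV[R]_m -> 'rV[R]_n) (lift : 'rV[R]_n -> 'rV[R]_m).
Variables (damp stiff : 'rV[R]_m -> 'rV[R]_m -> R).
Hypothesis lift_linear : linear lift.
Hypothesis damp_scalar : forall v, scalar (damp v).
Hypothesis dampC : forall v w, damp v w = damp w v.
Hypothesis damp_gt0 : forall v, v != 0 -> 0 < damp v v.
Hypothesis stiff_scalar : forall u, scalar (stiff u).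
Hypothesis stiffC : forall u w, stiff u w = stiff w u.
Hypothesis stiff_lift_gt0 : forall y, y != 0 -> 0 < stiff (lift y) (lift y).
Hypothesis stiff_lift_proj : forall u w, stiff u (lift (proj w)) = stiff u w.

Definition damped_lin (X : 'rV[R]_(n + m)) : 'rV[R]_(n + m) :=
  row_mx (proj (rsubmx X))
         (\row_a (- damp (rsubmx X) (ebasis a) - stiff (lift (lsubmx X)) (ebasis a))).

Lemma stiff_lift_scalar u : scalar (fun y => stiff u (lift y)).
Proof. exact: scalar_comp. Qed.

Lemma damp0 w : damp 0 w = 0.
Proof. by rewrite dampC scalar0. Qed.

Lemma damp_ge0 v : 0 <= damp v v.
Proof. by have [->|/damp_gt0/ltW//] := eqVneq v 0; rewrite damp0. Qed.

Lemma stiff_lift_ge0 y : 0 <= stiff (lift y) (lift y).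
Proof.
have [->|/stiff_lift_gt0/ltW//] := eqVneq y 0.
by have /= -> := scalar0 (stiff_lift_scalar (lift 0)).
Qed.

Lemma damp_eq0 v : damp v v = 0 -> v = 0.
Proof. by apply: contra_eq => /damp_gt0; rewrite lt0r => /andP[]. Qed.

Lemma stiff_lift_eq0 y : (forall a, stiff (lift y) (ebasis a) = 0) -> y = 0.
Proof.
move=> hy; apply: contra_eq (_ : stiff (lift y) (lift y) = 0).
  by move=> /stiff_lift_gt0; rewrite lt0r => /andP[].
by rewrite (scalar_basis _ (stiff_scalar _)) big1 // => a _; rewrite hy mulr0.
Qed.

Lemma damped_energy_balance (ya yb : 'rV[R]_n) (va vb : 'rV[R]_m) (al be : R) :
  proj va = al *: ya - be *: yb -> proj vb = be *: ya + al *: yb ->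
  (forall a, damp va (ebasis a) + stiff (lift ya) (ebasis a) = - (al * va 0 a - be * vb 0 a)) ->
  (forall a, damp vb (ebasis a) + stiff (lift yb) (ebasis a) = - (be * va 0 a + al * vb 0 a)) ->
  al * (dotr va va + dotr vb vb + stiff (lift ya) (lift ya) + stiff (lift yb) (lift yb))
    = - (damp va va + damp vb vb).
Proof.
move=> pa pb ea eb.
have Ea : damp va va + stiff (lift ya) va = - (al * dotr va va - be * dotr vb va).
  apply: (scalar_eq_basis (f := fun w => damp va w + stiff (lift ya) w)
                          (g := fun w => - (al * dotr va w - be * dotr vb w))).
  - exact: scalar_add.
  - exact/scalar_opp/scalar_sub/scalar_mull/dotr_scalar/scalar_mull/dotr_scalar.
  - by move=> a; rewrite !dotr_ebasis ea.
have Eb : damp vb vb + stiff (lift yb) vb = - (be * dotr va vb + al * dotr vb vb).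
  apply: (scalar_eq_basis (f := fun w => damp vb w + stiff (lift yb) w)
                          (g := fun w => - (be * dotr va w + al * dotr vb w))).
  - exact: scalar_add.
  - exact/scalar_opp/scalar_add/scalar_mull/dotr_scalar/scalar_mull/dotr_scalar.
  - by move=> a; rewrite !dotr_ebasis eb.
have Ka : stiff (lift ya) va = al * stiff (lift ya) (lift ya) - be * stiff (lift ya) (lift yb).
  by rewrite -stiff_lift_proj pa (scalar_combB _ _ _ _ (stiff_lift_scalar _)).
have Kb : stiff (lift yb) vb = be * stiff (lift yb) (lift ya) + al * stiff (lift yb) (lift yb).
  by rewrite -stiff_lift_proj pb (scalar_combD _ _ _ _ (stiff_lift_scalar _)).
have := stiffC (lift ya) (lift yb); have := dotrC va vb.
nra.
Qed.

Lemma damped_lin_real_pair_neg (al be : R) (Xr Xi : 'rV[R]_(n + m)) :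
  damped_lin Xr = al *: Xr - be *: Xi -> damped_lin Xi = be *: Xr + al *: Xi ->
  (Xr != 0) || (Xi != 0) -> al < 0.
Proof.
move=> hr hi nz.
set ya := lsubmx Xr; set yb := lsubmx Xi; set va := rsubmx Xr; set vb := rsubmx Xi.
have pa : proj va = al *: ya - be *: yb.
  by have := congr1 lsubmx hr; rewrite /damped_lin row_mxKl linearB !linearZ.
have pb : proj vb = be *: ya + al *: yb.
  by have := congr1 lsubmx hi; rewrite /damped_lin row_mxKl linearD !linearZ.
have ea a : damp va (ebasis a) + stiff (lift ya) (ebasis a) = - (al * va 0 a - be * vb 0 a).
  have := congr1 (fun M => rsubmx M 0 a) hr.
  by rewrite /= /damped_lin row_mxKr linearB !linearZ /= !mxE => <-; ring.
have eb a : damp vb (ebasis a) + stiff (lift yb) (ebasis a) = - (be * va 0 a + al * vb 0 a).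
  have := congr1 (fun M => rsubmx M 0 a) hi.
  by rewrite /= /damped_lin row_mxKr linearD !linearZ /= !mxE => <-; ring.
rewrite ltNge; apply/negP => al_ge0.
have energy_ge0 :
    0 <= dotr va va + dotr vb vb + stiff (lift ya) (lift ya) + stiff (lift yb) (lift yb).
  by rewrite !addr_ge0 ?dotr_ge0 ?stiff_lift_ge0.
have := mulr_ge0 al_ge0 energy_ge0; rewrite (damped_energy_balance pa pb ea eb) oppr_ge0 => hC.
have va0 : va = 0 by apply: damp_eq0; have := damp_ge0 va; have := damp_ge0 vb; lra.
have vb0 : vb = 0 by apply: damp_eq0; have := damp_ge0 va; have := damp_ge0 vb; lra.
have ya0 : ya = 0.
  by apply: stiff_lift_eq0 => a; have := ea a; rewrite va0 vb0 damp0 !mxE; lra.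
have yb0 : yb = 0.
  by apply: stiff_lift_eq0 => a; have := eb a; rewrite va0 vb0 damp0 !mxE; lra.
move: nz; rewrite -(hsubmxK Xr) -(hsubmxK Xi) -/ya -/yb -/va -/vb va0 vb0 ya0 yb0.
by rewrite row_mx0 eqxx.
Qed.

End DampedLinearSystem.

Section Coordinates.
Variable R : realType.
Implicit Types (q w : 'rV[R]_6) (y : 'rV[R]_5) (k i : 'I_3).

Definition sepx k q := xc q (oth1 k) - xc q (oth2 k).
Definition sepz k q := zc q (oth1 k) - zc q (oth2 k).

Lemma xiE i : nat_of_ord (xi i) = (2 * i)%N.
Proof. by rewrite /xi inordK //; case: i => [[|[|[|]]]]. Qed.
Lemma ziE i : nat_of_ord (zi i) = (2 * i + 1)%N.
Proof. by rewrite /zi inordK //; case: i => [[|[|[|]]]]. Qed.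
Lemma oth1E k : nat_of_ord (oth1 k) = ((k + 1) %% 3)%N.
Proof. by rewrite /oth1 inordK // ltn_mod. Qed.
Lemma oth2E k : nat_of_ord (oth2 k) = ((k + 2) %% 3)%N.
Proof. by rewrite /oth2 inordK // ltn_mod. Qed.

Lemma oth1_neq_oth2 k : oth1 k != oth2 k.
Proof.
apply/negP => /eqP/(congr1 (@nat_of_ord 3)); rewrite oth1E oth2E.
by case: k => [[|[|[|//]]] Hk].
Qed.

Definition entry w (j : nat) := w 0 (inord j).
Definition entry_evaluated w (j : nat) := entry w j.

Lemma entryE w (a : 'I_6) : w 0 a = entry w a.
Proof. by rewrite /entry inord_val. Qed.

(* Computes the index of every [entry w j]; the copy [entry_evaluated] keeps
   the loop from matching an entry twice. *)
Local Ltac eval_entries :=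
  repeat match goal with |- context [entry ?w ?j] =>
    let j' := eval vm_compute in j in change (entry w j) with (entry_evaluated w j') end;
  rewrite /entry_evaluated.

Local Ltac expand_coords k :=
  rewrite /sepx /sepz /liftQ /projQ /xc /zc !mxE !entryE ?xiE ?ziE ?oth1E ?oth2E;
  case: k => [[|[|[|//]]] Hk] /=; rewrite ?inordK //=; eval_entries; ring.

Lemma sepx_liftQ_projQ k w : sepx k (liftQ (projQ w)) = sepx k w.
Proof. by expand_coords k. Qed.
Lemma sepz_liftQ_projQ k w : sepz k (liftQ (projQ w)) = sepz k w.
Proof. by expand_coords k. Qed.
Lemma zc_liftQ_projQ i w : zc (liftQ (projQ w)) i = zc w i.
Proof. by expand_coords i. Qed.

Lemma liftQ_linear : linear (@liftQ R).
Proof.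
move=> a y1 y2; apply/rowP => c; rewrite !mxE.
by case: c => [[|[|[|[|[|[|//]]]]]] Hc] /=; rewrite ?mxE; ring.
Qed.

Lemma projQ_linear : linear (@projQ R).
Proof.
move=> a w1 w2; apply/rowP => c; rewrite !mxE.
by case: c => [[|[|[|[|[|//]]]]] Hc] /=; rewrite /xc /zc ?mxE; ring.
Qed.

Lemma projQ0 : projQ (0 : 'rV[R]_6) = 0.
Proof.
apply/rowP => b; rewrite !mxE /xc /zc.
by case: b => [[|[|[|[|[|//]]]]] Hb] /=; rewrite !mxE ?subr0.
Qed.

Lemma xc_scalar i : scalar (fun w : 'rV[R]_6 => xc w i).
Proof. by move=> a w1 w2; rewrite /xc !mxE. Qed.
Lemma zc_scalar i : scalar (fun w : 'rV[R]_6 => zc w i).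
Proof. by move=> a w1 w2; rewrite /zc !mxE. Qed.
Lemma sepx_scalar k : scalar (@sepx k).
Proof. by move=> a w1 w2; rewrite /sepx !xc_scalar; ring. Qed.
Lemma sepz_scalar k : scalar (@sepz k).
Proof. by move=> a w1 w2; rewrite /sepz !zc_scalar; ring. Qed.

Lemma is_diff_xc q i : is_diff q (fun p : 'rV[R]_6 => xc p i) (fun w => xc w i).
Proof. exact: is_diff_coord. Qed.
Lemma is_diff_zc q i : is_diff q (fun p : 'rV[R]_6 => zc p i) (fun w => zc w i).
Proof. exact: is_diff_coord. Qed.
Lemma is_diff_sepx q k : is_diff q (sepx k) (sepx k).
Proof. exact: is_diff_sub (is_diff_xc _ _) (is_diff_xc _ _). Qed.
Lemma is_diff_sepz q k : is_diff q (sepz k) (sepz k).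
Proof. exact: is_diff_sub (is_diff_zc _ _) (is_diff_zc _ _). Qed.

Lemma is_diff_liftQ y : is_diff y (@liftQ R) (@liftQ R).
Proof.
apply: is_diff_eq (is_diff_row (dF := fun j v => liftQ v 0 j) _) _; last first.
  by apply/funext => v; apply/rowP => j; rewrite mxE.
move=> j.
have -> : (fun z : 'rV[R]_5 => liftQ z 0 j) =
  (fun z => [:: 0; z 0 (inord 2); z 0 (inord 0); z 0 (inord 3); z 0 (inord 1);
    z 0 (inord 4)]`_j) by apply/funext => z; rewrite mxE.
case: j => [[|[|[|[|[|[|//]]]]]] Hj] /=; first exact: is_diff_const.
all: exact: is_diff_coord.
Qed.

Lemma is_diff_projQ w : is_diff w (@projQ R) (@projQ R).
Proof.
apply: is_diff_eq (is_diff_row (dF := fun j v => projQ v 0 j) _) _; last first.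
  by apply/funext => v; apply/rowP => j; rewrite mxE.
move=> j.
have -> : (fun z : 'rV[R]_6 => projQ z 0 j) =
  (fun z => [:: xc z 1 - xc z 0; xc z 2%:R - xc z 0; zc z 0; zc z 1; zc z 2%:R]`_j)
  by apply/funext => z; rewrite mxE.
case: j => [[|[|[|[|[|//]]]]] Hj] /=.
- exact: is_diff_sub (is_diff_xc _ _) (is_diff_xc _ _).
- exact: is_diff_sub (is_diff_xc _ _) (is_diff_xc _ _).
all: exact: is_diff_zc.
Qed.

End Coordinates.

Section EdgeLengths.
Variable R : realType.
Implicit Types (q u v w : 'rV[R]_6) (k : 'I_3).

Definition sqlen k q := sepx k q ^+ 2 + sepz k q ^+ 2.
Definition sepdot k q w := sepx k q * sepx k w + sepz k q * sepz k w.
Definition dlen k q w := sepdot k q w / len q k.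
Definition d2len k q u w :=
  sepdot k u w / len q k - sepdot k q u * sepdot k q w / len q k ^+ 3.
Definition separated q := forall k, 0 < sqlen k q.

Lemma lenE q k : len q k = Num.sqrt (sqlen k q).
Proof. by []. Qed.

Lemma separated_inQ q : inQ q -> separated q.
Proof.
move=> hq k; have := hq _ _ (oth1_neq_oth2 k); rewrite xpair_eqE negb_and => hxz.
rewrite /sqlen lt0r addr_ge0 ?sqr_ge0 // andbT paddr_eq0 ?sqr_ge0 // !sqrf_eq0.
by rewrite /sepx /sepz !subr_eq0 negb_and.
Qed.

Lemma len_gt0 q k : separated q -> 0 < len q k.
Proof. by move=> sep; rewrite lenE sqrtr_gt0. Qed.

Lemma len_neq0 q k : separated q -> len q k != 0.
Proof. by move=> sep; rewrite gt_eqF ?len_gt0. Qed.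

Lemma sepdotC k u w : sepdot k u w = sepdot k w u.
Proof. by rewrite /sepdot; ring. Qed.

Lemma sepdot_scalar k q : scalar (sepdot k q).
Proof. by move=> a w1 w2; rewrite /sepdot sepx_scalar sepz_scalar; ring. Qed.

Lemma dlen_scalar k q : scalar (dlen k q).
Proof. by move=> a w1 w2; rewrite /dlen sepdot_scalar; ring. Qed.

Lemma d2len_scalar k q u : scalar (d2len k q u).
Proof. by move=> a w1 w2; rewrite /d2len !sepdot_scalar; ring. Qed.

Lemma dlen_liftQ_projQ k q w : dlen k q (liftQ (projQ w)) = dlen k q w.
Proof. by rewrite /dlen /sepdot sepx_liftQ_projQ sepz_liftQ_projQ. Qed.

Lemma d2len_liftQ_projQ k q u w : d2len k q u (liftQ (projQ w)) = d2len k q u w.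
Proof. by rewrite /d2len /sepdot !sepx_liftQ_projQ !sepz_liftQ_projQ. Qed.

Lemma is_diff_sqlen q k : is_diff q (sqlen k) (fun w => 2 * sepdot k q w).
Proof.
apply: is_diff_eq (is_diff_add (is_diff_sqr (is_diff_sepx q k))
                               (is_diff_sqr (is_diff_sepz q k))) _.
by apply/funext => w; rewrite /sepdot; ring.
Qed.

Lemma is_diff_len q k : separated q -> is_diff q (fun p => len p k) (dlen k q).
Proof.
move=> sep; have hs := is_derive1_sqrt (sep k).
have hd : derivable (@Num.sqrt R) (sqlen k q) 1 by exact: ex_derive.
have hc := is_diff_derivable_comp (is_diff_sqlen q k) hd.
rewrite (_ : (fun p => len p k) = (fun p => Num.sqrt (sqlen k p))) //.
apply: is_diff_eq hc _; apply/funext => w; rewrite derive1E derive_sqrt // /dlen.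
by have := len_neq0 k sep; rewrite lenE => ?; field.
Qed.

Lemma is_diff_len_inv q k : separated q ->
  is_diff q (fun p => (len p k)^-1) (fun w => - (len q k)^-2 * dlen k q w).
Proof. by move=> sep; apply: is_diff_inv (is_diff_len k sep) (len_neq0 k sep). Qed.

Lemma is_diff_sepdot q k w : is_diff q (fun p => sepdot k p w) (fun u => sepdot k u w).
Proof.
apply: is_diff_eq (is_diff_add (is_diff_mul (is_diff_sepx q k) (is_diff_const _ _))
                               (is_diff_mul (is_diff_sepz q k) (is_diff_const _ _))) _.
by apply/funext => u; rewrite /sepdot; ring.
Qed.

Lemma is_diff_sepdot_r q k v : is_diff v (sepdot k q) (sepdot k q).
Proof.
apply: is_diff_eq (is_diff_add (is_diff_mul (is_diff_const _ _) (is_diff_sepx v k))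
                               (is_diff_mul (is_diff_const _ _) (is_diff_sepz v k))) _.
by apply/funext => u; rewrite /sepdot; ring.
Qed.

Lemma is_diff_dlen q k w : separated q ->
  is_diff q (fun p => dlen k p w) (fun u => d2len k q u w).
Proof.
move=> sep; apply: is_diff_eq (is_diff_mul (is_diff_sepdot q k w) (is_diff_len_inv k sep)) _.
apply/funext => u; rewrite /d2len /dlen.
by have := len_neq0 k sep => ?; field.
Qed.

Lemma is_diff_dlen_r q k v : is_diff v (dlen k q) (dlen k q).
Proof.
apply: is_diff_eq (is_diff_mul (is_diff_sepdot_r q k v) (is_diff_const _ _)) _.
by apply/funext => u; rewrite /dlen; ring.
Qed.

Lemma separated_near (V : normedModType R) (phi dphi : V -> 'rV[R]_6) x :
  is_diff x phi dphi -> separated (phi x) -> \forall y \near x, separated (phi y).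
Proof.
move=> hphi sep; apply: filter_forall => k.
have [/differentiable_continuous hc _] := is_diff_compose hphi (is_diff_sqlen (phi x) k).
exact: cvgr_gt _ hc 0 (sep k).
Qed.

End EdgeLengths.

Section Model.
Variables (R : realType) (ks kn nus nuns nudb : R) (lbar : 'I_3 -> R) (chi : R -> R).
Hypothesis chi_derivable : forall s, derivable chi s 1.
Hypothesis dchi_derivable : forall s, derivable (derive1 chi) s 1.
Implicit Types (q u v w : 'rV[R]_6) (y : 'rV[R]_5).

Local Notation dchi := (derive1 chi).
Local Notation d2chi := (derive1 (derive1 chi)).

Definition gradU q w := ks * \sum_(k < 3) (len q k - lbar k) * dlen k q w
  + kn * \sum_(i < 3) dchi (zc q i) * zc w i + \sum_(i < 3) zc w i.
Definition hessU q u w :=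
  ks * \sum_(k < 3) (dlen k q u * dlen k q w + (len q k - lbar k) * d2len k q u w)
  + kn * \sum_(i < 3) d2chi (zc q i) * zc u i * zc w i.
Definition dissipation q v := nus / 2 * \sum_(k < 3) dlen k q v ^+ 2
  - nuns / 2 * \sum_(i < 3) dchi (zc q i) * xc v i ^+ 2
  + nudb / 2 * \sum_(i < 3) chi (zc q i) * zc v i ^+ 2.
Definition damping q v w := nus * \sum_(k < 3) dlen k q v * dlen k q w
  - nuns * \sum_(i < 3) dchi (zc q i) * xc v i * xc w i
  + nudb * \sum_(i < 3) chi (zc q i) * zc v i * zc w i.

Lemma is_diff_chi_zc q i : is_diff q (fun p => chi (zc p i)) (fun w => dchi (zc q i) * zc w i).
Proof. by have := is_diff_derivable_comp (is_diff_zc q i) (@chi_derivable (zc q i)). Qed.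

Lemma is_diff_dchi_zc q i : is_diff q (fun p => dchi (zc p i)) (fun w => d2chi (zc q i) * zc w i).
Proof. by have := is_diff_derivable_comp (is_diff_zc q i) (@dchi_derivable (zc q i)). Qed.

Lemma is_diff_Upot q : separated q -> is_diff q (Upot ks kn lbar chi) (gradU q).
Proof.
move=> sep.
have hl k : is_diff q (fun p => (len p k - lbar k) ^+ 2)
                      (fun u => 2 * ((len q k - lbar k) * dlen k q u)).
  apply: is_diff_eq (is_diff_sqr (is_diff_sub (is_diff_len k sep) (is_diff_const _ _))) _.
  by apply/funext => u; rewrite subr0.
apply: is_diff_eq (is_diff_add (is_diff_add
    (is_diff_mul (is_diff_const _ _) (is_diff_sum hl))
    (is_diff_mul (is_diff_const _ _) (is_diff_sum (fun i => is_diff_chi_zc q i))))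
    (is_diff_sum (fun i => is_diff_zc q i))) _.
by apply/funext => u; rewrite /gradU -mulr_sumr; field.
Qed.

Lemma is_diff_gradU q w : separated q -> is_diff q (fun p => gradU p w) (fun u => hessU q u w).
Proof.
move=> sep.
have hl k : is_diff q (fun p => (len p k - lbar k) * dlen k p w)
    (fun u => dlen k q u * dlen k q w + (len q k - lbar k) * d2len k q u w).
  apply: is_diff_eq (is_diff_mul (is_diff_sub (is_diff_len k sep) (is_diff_const _ _))
                                 (is_diff_dlen k w sep)) _.
  by apply/funext => u; ring.
have hz i : is_diff q (fun p => dchi (zc p i) * zc w i)
                      (fun u => d2chi (zc q i) * zc u i * zc w i).
  apply: is_diff_eq (is_diff_mul (is_diff_dchi_zc q i) (is_diff_const _ _)) _.
  by apply/funext => u; ring.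
apply: is_diff_eq (is_diff_add (is_diff_add
    (is_diff_mul (is_diff_const _ _) (is_diff_sum hl))
    (is_diff_mul (is_diff_const _ _) (is_diff_sum hz))) (is_diff_const _ _)) _.
by apply/funext => u; rewrite /hessU; ring.
Qed.

Lemma Rayleigh_separated q : separated q -> Rayleigh nus nuns nudb chi q = dissipation q.
Proof.
move=> sep; apply/funext => v; rewrite /Rayleigh /dissipation.
congr (_ * _ - _ + _); apply: eq_bigr => k _.
by rewrite (is_diff_derive _ (is_diff_len k sep)).
Qed.

Lemma is_diff_dissipation q v : is_diff v (dissipation q) (damping q v).
Proof.
have hl k : is_diff v (fun p => dlen k q p ^+ 2) (fun w => 2 * (dlen k q v * dlen k q w)).
  exact: is_diff_sqr (is_diff_dlen_r q k v).
have hx i : is_diff v (fun p => dchi (zc q i) * xc p i ^+ 2)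
                      (fun w => 2 * (dchi (zc q i) * xc v i * xc w i)).
  apply: is_diff_eq (is_diff_mul (is_diff_const _ _) (is_diff_sqr (is_diff_xc v i))) _.
  by apply/funext => w; ring.
have hz i : is_diff v (fun p => chi (zc q i) * zc p i ^+ 2)
                      (fun w => 2 * (chi (zc q i) * zc v i * zc w i)).
  apply: is_diff_eq (is_diff_mul (is_diff_const _ _) (is_diff_sqr (is_diff_zc v i))) _.
  by apply/funext => w; ring.
apply: is_diff_eq (is_diff_add (is_diff_sub
    (is_diff_mul (is_diff_const _ _) (is_diff_sum hl))
    (is_diff_mul (is_diff_const _ _) (is_diff_sum hx)))
    (is_diff_mul (is_diff_const _ _) (is_diff_sum hz))) _.
by apply/funext => w; rewrite /damping -!mulr_sumr; field.
Qed.

Lemma Fdiss_separated q v : separated q ->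
  Fdiss nus nuns nudb chi q v = \row_a - damping q v (ebasis a).
Proof.
move=> sep; apply/rowP => a; rewrite !mxE (Rayleigh_separated sep).
by rewrite (is_diff_derive _ (is_diff_dissipation q v)).
Qed.

Lemma dU_separated q : separated q -> dU ks kn lbar chi q = \row_a gradU q (ebasis a).
Proof.
by move=> sep; apply/rowP => a; rewrite !mxE (is_diff_derive _ (is_diff_Upot sep)).
Qed.

Lemma gradU_scalar q : scalar (gradU q).
Proof.
apply: scalar_add; first apply: scalar_add.
- by apply/scalar_mull/scalar_sum => k; apply/scalar_mull/dlen_scalar.
- by apply/scalar_mull/scalar_sum => i; apply/scalar_mull/zc_scalar.
- by apply/scalar_sum => i; exact: zc_scalar.
Qed.

Lemma hessU_scalar q u : scalar (hessU q u).
Proof.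
apply: scalar_add; apply/scalar_mull/scalar_sum => k.
  by apply: scalar_add; apply/scalar_mull; [exact: dlen_scalar | exact: d2len_scalar].
by apply/scalar_mull/zc_scalar.
Qed.

Lemma damping_scalar q v : scalar (damping q v).
Proof.
apply: scalar_add; first apply: scalar_sub.
- by apply/scalar_mull/scalar_sum => k; apply/scalar_mull/dlen_scalar.
- by apply/scalar_mull/scalar_sum => i; apply/scalar_mull/xc_scalar.
- by apply/scalar_mull/scalar_sum => i; apply/scalar_mull/zc_scalar.
Qed.

Lemma hessUC q u w : hessU q u w = hessU q w u.
Proof.
rewrite /hessU; congr (_ * _ + _ * _); apply: eq_bigr => k _; last by ring.
by rewrite /d2len sepdotC; ring.
Qed.

Lemma dampingC q v w : damping q v w = damping q w v.
Proof. by rewrite /damping; congr (_ * _ - _ * _ + _ * _); apply: eq_bigr => k _; ring. Qed.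

Lemma damping_diag q v : damping q v v = 2 * dissipation q v.
Proof.
rewrite /damping /dissipation.
have -> : \sum_(k < 3) dlen k q v * dlen k q v = \sum_(k < 3) dlen k q v ^+ 2.
  by apply: eq_bigr => k _; rewrite expr2.
have -> : \sum_(i < 3) dchi (zc q i) * xc v i * xc v i = \sum_(i < 3) dchi (zc q i) * xc v i ^+ 2.
  by apply: eq_bigr => i _; rewrite expr2 mulrA.
have -> : \sum_(i < 3) chi (zc q i) * zc v i * zc v i = \sum_(i < 3) chi (zc q i) * zc v i ^+ 2.
  by apply: eq_bigr => i _; rewrite expr2 mulrA.
by field.
Qed.

Lemma gradU_liftQ_projQ q w : gradU q (liftQ (projQ w)) = gradU q w.
Proof.
rewrite /gradU; congr (_ * _ + _ * _ + _); apply: eq_bigr => i _.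
- by rewrite dlen_liftQ_projQ.
- by rewrite zc_liftQ_projQ.
- by rewrite zc_liftQ_projQ.
Qed.

Lemma hessU_liftQ_projQ q u w : hessU q u (liftQ (projQ w)) = hessU q u w.
Proof.
rewrite /hessU; congr (_ * _ + _ * _); apply: eq_bigr => i _.
  by rewrite dlen_liftQ_projQ d2len_liftQ_projQ.
by rewrite zc_liftQ_projQ.
Qed.

Lemma derive_Uhat y (v : 'rV[R]_5) : separated (liftQ y) ->
  'D_v (Uhat ks kn lbar chi) y = gradU (liftQ y) (liftQ v).
Proof.
move=> sep; rewrite /Uhat (@derive_comp_linear _ _ _ _ (@liftQ R) (Upot ks kn lbar chi)).
  exact: is_diff_derive (is_diff_Upot sep).
by move=> h v' x'; rewrite liftQ_linear.
Qed.

Section Equilibrium.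
Variable ystar : 'rV[R]_5.
Hypothesis sep_star : separated (liftQ ystar).
Local Notation qs := (liftQ ystar).
Local Notation Xs := (row_mx ystar (0 : 'rV[R]_6)).
Local Notation linearization := (damped_lin (@projQ R) (@liftQ R) (damping qs) (hessU qs)).

Lemma hessian_Uhat_entry i j :
  hessian (Uhat ks kn lbar chi) ystar i j = hessU qs (liftQ (ebasis i)) (liftQ (ebasis j)).
Proof.
rewrite /hessian mxE.
rewrite (@near_eq_derive _ _ _ _ (fun y => gradU (liftQ y) (liftQ (ebasis j)))).
  rewrite (@derive_comp_linear _ _ _ _ (@liftQ R) (fun q => gradU q (liftQ (ebasis j)))).
    exact: is_diff_derive (is_diff_gradU _ sep_star).
  by move=> h v' x'; rewrite liftQ_linear.
have := separated_near (is_diff_liftQ ystar) sep_star.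
by apply: filterS => y sep; rewrite derive_Uhat.
Qed.

Lemma gradU_eq0 : (forall b, 'D_(ebasis b) (Uhat ks kn lbar chi) ystar = 0) ->
  forall w, gradU qs w = 0.
Proof.
move=> dU0 w; rewrite -gradU_liftQ_projQ.
rewrite (scalar_basis (projQ w) (scalar_comp (@liftQ_linear R) (gradU_scalar qs))) big1 // => b _.
by rewrite -derive_Uhat // dU0 mulr0.
Qed.

Lemma hessU_lift_gt0 : posdef_mx (hessian (Uhat ks kn lbar chi) ystar) ->
  forall y, y != 0 -> 0 < hessU qs (liftQ y) (liftQ y).
Proof.
move=> hK y y0; have := hK y y0.
suff -> : (y *m hessian (Uhat ks kn lbar chi) ystar *m y^T) 0 0 =
    hessU qs (liftQ y) (liftQ y) by [].
rewrite mxE (scalar_basis y (scalar_comp (@liftQ_linear R) (hessU_scalar qs (liftQ y)))).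
apply: eq_bigr => j _; rewrite !mxE hessUC.
rewrite (scalar_basis y (scalar_comp (@liftQ_linear R) (hessU_scalar qs (liftQ (ebasis j))))) mulrC.
by congr (_ * _); apply: eq_bigr => i _; rewrite hessian_Uhat_entry hessUC.
Qed.

Lemma damping_gt0 : (forall v, v != 0 -> 0 < Rayleigh nus nuns nudb chi qs v) ->
  forall v, v != 0 -> 0 < damping qs v v.
Proof.
by move=> hR v v0; rewrite damping_diag -(Rayleigh_separated sep_star) mulr_gt0 ?hR.
Qed.

Definition state_config (X : 'rV[R]_(5 + 6)) := liftQ (lsubmx X).

Lemma is_diff_state_config X : is_diff X state_config (fun V => liftQ (lsubmx V)).
Proof. exact: is_diff_compose (is_diff_lsubmx X) (is_diff_liftQ _). Qed.

Lemma state_config_Xs : state_config Xs = qs.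
Proof. by rewrite /state_config row_mxKl. Qed.

Lemma rsubmx_Xs : rsubmx Xs = 0.
Proof. by rewrite row_mxKr. Qed.

(* At a state with zero velocity, every term that is linear in the velocity
   only sees the velocity component of the displacement. *)
Lemma is_diff_dlen_velocity k :
  is_diff Xs (fun X => dlen k (state_config X) (rsubmx X)) (fun V => dlen k qs (rsubmx V)).
Proof.
have sepx0 : sepx k (rsubmx Xs) = 0 by rewrite rsubmx_Xs scalar0 //; exact: sepx_scalar.
have sepz0 : sepz k (rsubmx Xs) = 0 by rewrite rsubmx_Xs scalar0 //; exact: sepz_scalar.
have hx := is_diff_mul_vanishing_r
  (is_diff_compose (is_diff_state_config Xs) (is_diff_sepx _ k))
  (is_diff_compose (is_diff_rsubmx Xs) (is_diff_sepx _ k)) sepx0.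
have hz := is_diff_mul_vanishing_r
  (is_diff_compose (is_diff_state_config Xs) (is_diff_sepz _ k))
  (is_diff_compose (is_diff_rsubmx Xs) (is_diff_sepz _ k)) sepz0.
have hN := is_diff_add hx hz.
have N0 : sepdot k (state_config Xs) (rsubmx Xs) = 0 by rewrite /sepdot sepx0 sepz0 !mulr0 addr0.
have := is_diff_mul_vanishing_l hN
  (is_diff_compose_at (is_diff_state_config Xs) state_config_Xs (is_diff_len_inv k sep_star)) N0.
by rewrite state_config_Xs.
Qed.

Lemma is_diff_damping_state w :
  is_diff Xs (fun X => damping (state_config X) (rsubmx X) w) (fun V => damping qs (rsubmx V) w).
Proof.
have hl k : is_diff Xs (fun X => dlen k (state_config X) (rsubmx X) * dlen k (state_config X) w)
    (fun V => dlen k qs (rsubmx V) * dlen k qs w).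
  have hw := is_diff_compose_at (is_diff_state_config Xs) state_config_Xs
                                (is_diff_dlen k w sep_star).
  have v0 : dlen k (state_config Xs) (rsubmx Xs) = 0.
    by rewrite rsubmx_Xs scalar0 //; exact: dlen_scalar.
  by have := is_diff_mul_vanishing_l (is_diff_dlen_velocity k) hw v0; rewrite state_config_Xs.
have hx i : is_diff Xs (fun X => dchi (zc (state_config X) i) * xc (rsubmx X) i * xc w i)
    (fun V => dchi (zc qs i) * xc (rsubmx V) i * xc w i).
  have ha := is_diff_compose_at (is_diff_state_config Xs) state_config_Xs (is_diff_dchi_zc qs i).
  have hb := is_diff_compose (is_diff_rsubmx Xs) (is_diff_xc _ i).
  have v0 : xc (rsubmx Xs) i = 0 by rewrite rsubmx_Xs /xc mxE.
  apply: is_diff_eq (is_diff_mul (is_diff_mul_vanishing_r ha hb v0) (is_diff_const (xc w i) Xs)) _.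
  by apply/funext => V; rewrite /= state_config_Xs; ring.
have hz i : is_diff Xs (fun X => chi (zc (state_config X) i) * zc (rsubmx X) i * zc w i)
    (fun V => chi (zc qs i) * zc (rsubmx V) i * zc w i).
  have ha := is_diff_compose_at (is_diff_state_config Xs) state_config_Xs (is_diff_chi_zc qs i).
  have hb := is_diff_compose (is_diff_rsubmx Xs) (is_diff_zc _ i).
  have v0 : zc (rsubmx Xs) i = 0 by rewrite rsubmx_Xs /zc mxE.
  apply: is_diff_eq (is_diff_mul (is_diff_mul_vanishing_r ha hb v0) (is_diff_const (zc w i) Xs)) _.
  by apply/funext => V; rewrite /= state_config_Xs; ring.
apply: is_diff_eq (is_diff_add (is_diff_sub
    (is_diff_mul (is_diff_const nus Xs) (is_diff_sum hl))
    (is_diff_mul (is_diff_const nuns Xs) (is_diff_sum hx)))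
    (is_diff_mul (is_diff_const nudb Xs) (is_diff_sum hz))) _.
by apply/funext => V /=; rewrite /damping; ring.
Qed.

Definition fred_separated (X : 'rV[R]_(5 + 6)) : 'rV[R]_(5 + 6) :=
  row_mx (projQ (rsubmx X))
    (\row_a (- damping (state_config X) (rsubmx X) (ebasis a)
             - gradU (state_config X) (ebasis a))).

Lemma fred_near : \forall X \near Xs, fred ks kn nus nuns nudb lbar chi X = fred_separated X.
Proof.
have sep0 : separated (state_config Xs) by rewrite state_config_Xs.
have := separated_near (is_diff_state_config Xs) sep0.
apply: filterS => X sep; rewrite /fred /fred_separated /=; congr row_mx.
  by apply: derive_affine_line => h; rewrite projQ_linear.
by rewrite Fdiss_separated // dU_separated //; apply/rowP => a; rewrite !mxE.
Qed.

Lemma is_diff_fred_separated :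
  is_diff Xs fred_separated (linearization).
Proof.
apply: is_diff_eq (is_diff_row (dF := fun j V => linearization V 0 j) _) _; last first.
  by apply/funext => V; apply/rowP => j; rewrite mxE.
move=> j; case: (splitP j) => j' hj.
  have -> : j = lshift 6 j' by apply/val_inj.
  have -> : (fun X => fred_separated X 0 (lshift 6 j')) = (fun X => projQ (rsubmx X) 0 j').
    by apply/funext => X; rewrite /fred_separated row_mxEl.
  apply: is_diff_eq (is_diff_entry j' (is_diff_compose (is_diff_rsubmx Xs) (is_diff_projQ _))) _.
  by apply/funext => V; rewrite /damped_lin row_mxEl.
have -> : j = rshift 5 j' by apply/val_inj.
have -> : (fun X => fred_separated X 0 (rshift 5 j')) = (fun X =>
    - damping (state_config X) (rsubmx X) (ebasis j') - gradU (state_config X) (ebasis j')).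
  by apply/funext => X; rewrite /fred_separated row_mxEr mxE.
apply: is_diff_eq (is_diff_sub (is_diff_opp (is_diff_damping_state (ebasis j')))
  (is_diff_compose_at (is_diff_state_config Xs) state_config_Xs
                      (is_diff_gradU (ebasis j') sep_star))) _.
by apply/funext => V; rewrite /damped_lin row_mxEr mxE.
Qed.

Lemma is_diff_fred :
  is_diff Xs (fred ks kn nus nuns nudb lbar chi) (linearization).
Proof. exact: near_eq_is_diff fred_near is_diff_fred_separated. Qed.

Lemma fred_equilibrium : (forall b, 'D_(ebasis b) (Uhat ks kn lbar chi) ystar = 0) ->
  fred ks kn nus nuns nudb lbar chi Xs = 0.
Proof.
move=> dU0; rewrite (nbhs_singleton fred_near) /fred_separated state_config_Xs rsubmx_Xs projQ0.
rewrite (_ : \row_a _ = 0) ?row_mx0 //; apply/rowP => a.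
rewrite !mxE dampingC scalar0; last exact: damping_scalar.
by have := gradU_eq0 dU0 (ebasis a); lra.
Qed.

End Equilibrium.

End Model.

Theorem proposition8 (R : realType) (ks kn nus nuns nudb : R) (lbar : 'I_3 -> R)
    (chi : R -> R) (ystar : 'rV[R]_5) :
  0 < ks -> 0 < kn -> 0 < nus -> 0 < nuns -> 0 < nudb -> (forall k, 0 < lbar k) ->
  smoothing_of_chi0 chi ->
  inQ (liftQ ystar) ->
  (forall b : 'I_5, 'D_(ebasis b) (Uhat ks kn lbar chi) ystar = 0) ->
  posdef_mx (hessian (Uhat ks kn lbar chi) ystar) ->
  (forall v : 'rV[R]_6, v != 0 -> 0 < Rayleigh nus nuns nudb chi (liftQ ystar) v) ->
  robustly_stable (fred ks kn nus nuns nudb lbar chi) (row_mx ystar 0).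
Proof.
move=> _ _ _ _ _ _ [chi_smooth _] inQ_star dU0 hK hR.
have d0 : forall s, derivable chi s 1 := chi_smooth 0%N.
have d1 : forall s, derivable (derive1 chi) s 1 := chi_smooth 1%N.
have sep := separated_inQ inQ_star.
have hd := is_diff_fred ks kn nus nuns nudb lbar d0 d1 sep.
split; first exact: (fred_equilibrium nus nuns nudb d0 sep dU0).
split; first by case: hd.
move=> lam /eigenvalue_real_pair [Xr [Xi [hr hi nz]]].
rewrite !mul_rV_lin1 diff_val in hr hi.
apply: (damped_lin_real_pair_neg _ _ _ _ _ _ _ _ hr hi nz).
- exact: liftQ_linear.
- exact: damping_scalar.
- exact: dampingC.
- exact: (damping_gt0 sep hR).
- exact: hessU_scalar.
- exact: hessUC.
- exact: (hessU_lift_gt0 d0 d1 sep hK).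
- exact: hessU_liftQ_projQ.
Qed.
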